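(* In the setting of the context, let $M:\mathbb C^n\to\mathbb C^n$ be an invertible linear map and $\tau_M:=M\tau$; for $(\Pi',\Theta')\in\mathcal E(\mathbb C^n)$ let $A_M^{\Pi',\Theta'}$ be the operator defined like $A^{\Pi',\Theta'}$ but with $\tau$ replaced by $\tau_M$ (and $G_0$ replaced by $(\tau_M A^{-1})^*$). Given $(\Pi,\Theta)\in\mathcal E(\mathbb C^n)$, let $\Pi_M$ be the orthogonal projector onto $(M^* )^{-1}(\mathbb C^n_\Pi)$ and $\Theta_M:=\Pi_MM\Pi\Theta\Pi M^*\Pi_M$ on $\mathbb C^n_{\Pi_M}$. Then $A_M^{\Pi_M,\Theta_M}=A^{\Pi,\Theta}$.
   Context: $\mathcal H$ is a Hilbert space, $S$ a closed symmetric operator on $\mathcal H$ with $-S>0$ and finite deficiency indices $(n,n)$, $n\ge1$, and $A$ a self-adjoint extension of $S$ with $-A>0$ (e.g. the Friedrichs extension), so $0\in\rho(A)$. $\tau:D(A)\to\mathbb C^n$ is a surjective linear map, bounded for the graph norm of $A$, with $\ker\tau$ dense in $\mathcal H$ and $S=A|_{\ker\tau}$. For $z\in\rho(A)$, $G_z:=(\tau(-A+\bar z)^{-1})^*:\mathbb C^n\to\mathcal H$. $\mathcal E(\mathbb C^n)$ is the set of pairs $(\Pi,\Theta)$ with $\Pi$ an orthogonal projector on $\mathbb C^n$ and $\Theta$ a symmetric operator on $\mathbb C^n_\Pi:=\mathrm{Ran}\,\Pi$ ($\Pi$ also denotes the inclusion $\mathbb C^n_\Pi\to\mathbb C^n$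 and its adjoint). For $(\Pi,\Theta)\in\mathcal E(\mathbb C^n)$, $A^{\Pi,\Theta}\phi:=A\phi_0$ on $D(A^{\Pi,\Theta}):=\{\phi=\phi_0+G_0\xi:\ \phi_0\in D(A),\ \xi\in\mathbb C^n_\Pi,\ \Pi\tau\phi_0=\Theta\xi\}$. *)

(* Unbounded operators are given by a domain predicate
   and a function (values outside the domain are irrelevant); operators
   are compared through their graphs. *)
From mathcomp Require Import all_boot all_order all_algebra.
From mathcomp Require Import complex reals.
Set Implicit Arguments. Unset Strict Implicit. Unset Printing Implicit Defensive.
Import Order.TTheory GRing.Theory Num.Theory.
Local Open Scope ring_scope.

Section Hilbert.
Variable R : realType.
Local Notation C := R[i].
Variable H : lmodType C.
Variable ip : H -> H -> C.   (* inner product, linear in the first argument *)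

Definition hnorm (x : H) : C := sqrtC (ip x x).

Definition converges (u : nat -> H) (l : H) : Prop :=
  forall e : C, 0 < e -> exists N : nat, forall k, (N <= k)%N -> hnorm (u k - l) < e.

Definition is_hilbert : Prop :=
  [/\ (forall (a : C) (x y z : H), ip (a *: x + y) z = a * ip x z + ip y z),
      (forall x y : H, ip y x = (ip x y)^*),
      (forall x : H, 0 <= ip x x),
      (forall x : H, ip x x = 0 -> x = 0) &
      (forall u : nat -> H,
         (forall e : C, 0 < e -> exists N : nat, forall m k, (N <= m)%N -> (N <= k)%N ->
             hnorm (u m - u k) < e) ->
         exists l, converges u l)].

Definition linear_on (D : H -> Prop) (f : H -> H) : Prop :=
  [/\ D 0,
      (forall (a : C) x y, D x -> D y -> D (a *: x + y)) &
      (forall (a : C) x y, D x -> D y -> f (a *: x + y) = a *: f x + f y)].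

Definition dense (D : H -> Prop) : Prop :=
  forall x : H, forall e : C, 0 < e -> exists y, D y /\ hnorm (x - y) < e.

Definition adj_graph (D : H -> Prop) (f : H -> H) (psi eta : H) : Prop :=
  forall phi, D phi -> ip (f phi) psi = ip phi eta.

Definition closed_op (D : H -> Prop) (f : H -> H) : Prop :=
  forall (u : nat -> H) (x y : H), (forall k, D (u k)) ->
    converges u x -> converges (fun k => f (u k)) y -> D x /\ f x = y.

Definition symmetric_op (D : H -> Prop) (f : H -> H) : Prop :=
  dense D /\ forall phi psi, D phi -> D psi -> ip (f phi) psi = ip phi (f psi).

Definition self_adjoint (D : H -> Prop) (f : H -> H) : Prop :=
  dense D /\ forall psi eta, adj_graph D f psi eta <-> (D psi /\ eta = f psi).

Definition neg_strictly_positive (D : H -> Prop) (f : H -> H) : Prop :=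
  exists c : C, 0 < c /\ forall phi, D phi -> c * ip phi phi <= ip (- f phi) phi.

Definition subspace_dim (P : H -> Prop) (n : nat) : Prop :=
  exists v : 'I_n -> H,
    [/\ forall i, P (v i),
        (forall c : 'I_n -> C, \sum_i c i *: v i = 0 -> forall i, c i = 0) &
        (forall x, P x -> exists c : 'I_n -> C, x = \sum_i c i *: v i)].

Definition deficiency_indices (D : H -> Prop) (f : H -> H) (n : nat) : Prop :=
  subspace_dim (fun psi => adj_graph D f psi ('i *: psi)) n /\
  subspace_dim (fun psi => adj_graph D f psi (- ('i *: psi))) n.

End Hilbert.

Section Cn.
Variable R : realType.
Local Notation C := R[i].

Definition ipn (n : nat) (u v : 'cV[C]_n) : C := \sum_i u i 0 * (v i 0)^*.
Definition vnorm (n : nat) (u : 'cV[C]_n) : C := sqrtC (ipn u u).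

Definition adjmx (n : nat) (M : 'M[C]_n) : 'M[C]_n := (map_mx Num.conj M)^T.

Definition orth_proj (n : nat) (P : 'M[C]_n) : Prop :=
  P *m P = P /\ adjmx P = P.

(* A symmetric operator Theta on C^n_Pi = Ran Pi, encoded as the matrix on
   C^n that equals Pi Theta Pi (i.e. vanishes on (Ran Pi)^perp) *)
Definition sym_on_range (n : nat) (P T : 'M[C]_n) : Prop :=
  T = P *m T *m P /\ adjmx T = T.

Definition in_E (n : nat) (P T : 'M[C]_n) : Prop := orth_proj P /\ sym_on_range P T.
End Cn.

(* Graph of A^{Pi,Theta} built from (D(A), A), the trace map tau and G_0:
   { (phi_0 + G_0 xi, A phi_0) : phi_0 in D(A), xi in Ran Pi, Pi tau phi_0 = Theta xi } *)
Definition ext_graph (R : realType) (H : lmodType R[i]) (n : nat)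
  (DA : H -> Prop) (A : H -> H) (tau : H -> 'cV[R[i]]_n) (G0 : 'cV[R[i]]_n -> H)
  (P T : 'M[R[i]]_n) (phi psi : H) : Prop :=
  exists (phi0 : H) (xi : 'cV[R[i]]_n),
    [/\ DA phi0, P *m xi = xi, P *m tau phi0 = T *m xi,
        phi = phi0 + G0 xi & psi = A phi0].

(** The map [xi |-> M^* xi] is a bijection from [Ran Pi_M] onto [Ran Pi]
    which intertwines the two parametrisations of the extension: since
    [G^M_0 = (M tau (-A)^{-1})^* = G_0 M^*], the deficiency parts agree, and
    the boundary condition [Pi_M M tau phi0 = Theta_M xi] is equivalent to
    [Pi tau phi0 = Theta M^* xi] because [Pi_M M w = 0] iff [Pi w = 0].  The
    latter follows from [Pi_M M Pi = Pi_M M] and [Pi M^{-1} Pi_M = Pi M^{-1}],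
    both adjoints of the range inclusions [M^* (Ran Pi_M) = Ran Pi]. *)
From mathcomp Require Import all_boot all_order all_algebra.
From mathcomp Require Import complex reals.
Set Implicit Arguments. Unset Strict Implicit. Unset Printing Implicit Defensive.
Import Order.TTheory GRing.Theory Num.Theory.
Local Open Scope ring_scope.

Section Adjoint.
Variables (R : realType) (n : nat).
Implicit Types (A B M : 'M[R[i]]_n) (u v : 'cV[R[i]]_n).

Lemma adjmxM A B : adjmx (A *m B) = adjmx B *m adjmx A.
Proof. by rewrite /adjmx map_mxM trmx_mul. Qed.

Lemma adjmxK A : adjmx (adjmx A) = A.
Proof. by apply/matrixP=> i j; rewrite !mxE conjCK. Qed.

Lemma adjmx_unit M : (adjmx M \in unitmx) = (M \in unitmx).
Proof. by rewrite /adjmx unitmx_tr map_unitmx. Qed.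

Lemma adjmx_inv M : adjmx (invmx M) = invmx (adjmx M).
Proof. by rewrite /adjmx map_invmx trmx_inv. Qed.

Lemma ipn_mulmxr M u v : ipn u (M *m v) = ipn (adjmx M *m u) v.
Proof.
rewrite /ipn; under eq_bigr do rewrite !mxE rmorph_sum big_distrr.
under [RHS]eq_bigr do rewrite !mxE big_distrl.
rewrite exchange_big; apply: eq_bigr => i _; apply: eq_bigr => j _.
by rewrite !mxE /= rmorphM mulrA [u j 0 * _]mulrC.
Qed.

Lemma mulmx_cVP A B : (forall v, A *m v = B *m v) -> A = B.
Proof.
move=> eqAB; apply/matrixP=> i j.
by have := congr1 (fun w : 'cV_n => w i 0) (eqAB (delta_mx j 0)); rewrite -!colE !mxE.
Qed.

(* If [K] maps [Ran Q] into [Ran P], then [P K Q = K Q]; taking adjoints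
   yields the statement. *)
Lemma orth_proj_adj_range P Q K :
  orth_proj P -> orth_proj Q ->
  (forall v, Q *m v = v -> P *m (K *m v) = K *m v) ->
  Q *m adjmx K *m P = Q *m adjmx K.
Proof.
move=> [_ adjP] [QQ adjQ] KQ.
have PKQ : P *m K *m Q = K *m Q.
  by apply: mulmx_cVP => v; rewrite -!mulmxA KQ // mulmxA QQ.
by have := congr1 (@adjmx R n) PKQ; rewrite !adjmxM adjP adjQ mulmxA.
Qed.

End Adjoint.

Lemma hilbert_ip_inj (R : realType) (H : lmodType R[i]) (ip : H -> H -> R[i]) :
  is_hilbert ip -> forall x y, (forall z, ip x z = ip y z) -> x = y.
Proof.
case=> ip_lin _ _ ip_def _ x y eq_ip; apply/eqP; rewrite -subr_eq0; apply/eqP/ip_def.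
by rewrite -scaleN1r addrC ip_lin eq_ip mulN1r addNr.
Qed.

Lemma adjoint_trace_mulmx (R : realType) (H : lmodType R[i]) (ip : H -> H -> R[i])
    (n : nat) (M : 'M[R[i]]_n) (t : H -> 'cV[R[i]]_n) (G GM : 'cV[R[i]]_n -> H) :
  is_hilbert ip ->
  (forall xi psi, ip (G xi) psi = ipn xi (t psi)) ->
  (forall xi psi, ip (GM xi) psi = ipn xi (M *m t psi)) ->
  forall xi, GM xi = G (adjmx M *m xi).
Proof.
move=> hil adjG adjGM xi; apply: (hilbert_ip_inj hil) => psi.
by rewrite adjGM adjG ipn_mulmxr.
Qed.

Lemma ext_graph_reparam (R : realType) (H : lmodType R[i]) (n : nat)
    (DA : H -> Prop) (A : H -> H) (tau tau' : H -> 'cV[R[i]]_n)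
    (G G' : 'cV[R[i]]_n -> H) (P T P' T' K : 'M[R[i]]_n) :
  K \in unitmx ->
  (forall xi : 'cV_n, G' xi = G (K *m xi)) ->
  (forall xi : 'cV_n, P' *m xi = xi <-> P *m (K *m xi) = K *m xi) ->
  (forall phi0 (xi : 'cV_n), P' *m xi = xi ->
     P' *m tau' phi0 = T' *m xi <-> P *m tau phi0 = T *m (K *m xi)) ->
  forall phi psi,
    ext_graph DA A tau' G' P' T' phi psi <-> ext_graph DA A tau G P T phi psi.
Proof.
move=> Kunit eqG range bc phi psi; split.
  case=> phi0 [xi [DAphi0 P'xi bc' -> ->]].
  exists phi0, (K *m xi); split=> //; [exact/range | exact/bc | by rewrite eqG].
case=> phi0 [xi [DAphi0 Pxi bcxi -> ->]].
have P'xi : P' *m (invmx K *m xi) = invmx K *m xi by apply/range; rewrite mulKVmx.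
exists phi0, (invmx K *m xi); split=> //; first by apply/bc; rewrite ?mulKVmx.
by rewrite eqG mulKVmx.
Qed.

Section ProjectorTransport.
Variables (R : realType) (n : nat) (M P PM : 'M[R[i]]_n).
Hypotheses (M_unit : M \in unitmx) (P_proj : orth_proj P) (PM_proj : orth_proj PM).
Hypothesis PM_range : forall v : 'cV[R[i]]_n,
  PM *m v = v <-> exists u, P *m u = u /\ v = invmx (adjmx M) *m u.

Let adjM_unit : adjmx M \in unitmx.
Proof. by rewrite adjmx_unit. Qed.

Implicit Types (t v w xi : 'cV[R[i]]_n) (T : 'M[R[i]]_n).

Lemma range_PM_adjmx v : PM *m v = v <-> P *m (adjmx M *m v) = adjmx M *m v.
Proof.
split=> [/PM_range [u [Pu ->]] | Pv]; first by rewrite mulKVmx.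
by apply/PM_range; exists (adjmx M *m v); rewrite mulKmx.
Qed.

Lemma PM_M_P : PM *m M *m P = PM *m M.
Proof.
by rewrite -[M in RHS]adjmxK -[M in LHS]adjmxK; apply: orth_proj_adj_range => // v /range_PM_adjmx.
Qed.

Lemma P_invM_PM : P *m invmx M *m PM = P *m invmx M.
Proof.
rewrite -[invmx M]adjmxK adjmx_inv; apply: orth_proj_adj_range => // u Pu.
by apply/PM_range; exists u.
Qed.

Lemma PM_mulmx_eq t s : PM *m (M *m t) = PM *m (M *m s) <-> P *m t = P *m s.
Proof.
split=> [eqPM | eqP_]; last by rewrite ![PM *m (M *m _)]mulmxA -PM_M_P -!mulmxA eqP_.
rewrite -[t](mulKmx M_unit) -[s](mulKmx M_unit) ![P *m (invmx M *m _)]mulmxA.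
by rewrite -P_invM_PM -!mulmxA eqPM.
Qed.

Lemma boundary_condition_reparam T t xi :
  sym_on_range P T -> PM *m xi = xi ->
  PM *m (M *m t) = (PM *m M *m P *m T *m P *m adjmx M *m PM) *m xi
  <-> P *m t = T *m (adjmx M *m xi).
Proof.
move=> [defT _] PMxi.
have PT : P *m T = T by rewrite defT !mulmxA (proj1 P_proj).
have TP : T *m P = T by rewrite defT -!mulmxA (proj1 P_proj).
rewrite -!mulmxA PMxi [T *m (P *m _)]mulmxA TP PM_mulmx_eq.
by rewrite !mulmxA (proj1 P_proj) PT.
Qed.

End ProjectorTransport.

Theorem lemma4p4
  (R : realType) (H : lmodType R[i]) (ip : H -> H -> R[i]) (n : nat)
  (DA : H -> Prop) (A : H -> H) (Ainv : H -> H)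
  (tau : H -> 'cV[R[i]]_n) (G0 : 'cV[R[i]]_n -> H)
  (M : 'M[R[i]]_n) (G0M : 'cV[R[i]]_n -> H)
  (P T PM : 'M[R[i]]_n) :
  (* Hilbert space, n >= 1 *)
  is_hilbert ip -> (1 <= n)%N ->
  (* A self-adjoint with -A > 0, and its inverse A^{-1} (0 in rho(A)) *)
  linear_on DA A -> self_adjoint ip DA A -> neg_strictly_positive ip DA A ->
  (forall psi, DA (Ainv psi) /\ A (Ainv psi) = psi) ->
  (forall phi, DA phi -> Ainv (A phi) = phi) ->
  (* tau : D(A) -> C^n linear, surjective, graph-norm bounded, dense kernel *)
  (forall (a : R[i]) x y, DA x -> DA y -> tau (a *: x + y) = a *: tau x + tau y) ->
  (forall v : 'cV[R[i]]_n, exists phi, DA phi /\ tau phi = v) ->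
  (exists c : R[i], 0 < c /\ forall phi, DA phi ->
      vnorm (tau phi) <= c * (hnorm ip phi + hnorm ip (A phi))) ->
  dense ip (fun phi => DA phi /\ tau phi = 0) ->
  (* S := A restricted to ker tau: closed, symmetric, -S > 0, indices (n,n) *)
  closed_op ip (fun phi => DA phi /\ tau phi = 0) A ->
  symmetric_op ip (fun phi => DA phi /\ tau phi = 0) A ->
  neg_strictly_positive ip (fun phi => DA phi /\ tau phi = 0) A ->
  deficiency_indices ip (fun phi => DA phi /\ tau phi = 0) A n ->
  (* G_0 = (tau (-A)^{-1})^* *)
  (forall (xi : 'cV[R[i]]_n) (psi : H), ip (G0 xi) psi = ipn xi (tau (- Ainv psi))) ->
  (* M invertible, tau_M := M tau, G^M_0 = (tau_M (-A)^{-1})^* *)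
  M \in unitmx ->
  (forall (xi : 'cV[R[i]]_n) (psi : H),
      ip (G0M xi) psi = ipn xi (M *m tau (- Ainv psi))) ->
  (* (Pi, Theta) in E(C^n) *)
  in_E P T ->
  (* Pi_M = orthogonal projector onto (adj M)^{-1}(Ran Pi) *)
  orth_proj PM ->
  (forall v : 'cV[R[i]]_n,
      PM *m v = v <-> exists u, P *m u = u /\ v = invmx (adjmx M) *m u) ->
  (* A_M^{Pi_M, Theta_M} = A^{Pi, Theta}, Theta_M = Pi_M M Pi Theta Pi (adj M) Pi_M *)
  forall phi psi : H,
    ext_graph DA A (fun x => M *m tau x) G0M PM
      (PM *m M *m P *m T *m P *m adjmx M *m PM) phi psi
    <-> ext_graph DA A tau G0 P T phi psi.
Proof.
move=> hil _ _ _ _ _ _ _ _ _ _ _ _ _ _ adjG0 M_unit adjG0M [P_proj T_sym] PM_proj PM_range.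
have adjM_unit : adjmx M \in unitmx by rewrite adjmx_unit.
apply: (ext_graph_reparam _ _ adjM_unit).
- exact: adjoint_trace_mulmx hil adjG0 adjG0M.
- exact: range_PM_adjmx M_unit PM_range.
- move=> phi0 xi PMxi.
  exact: (boundary_condition_reparam M_unit P_proj PM_proj PM_range (tau phi0) T_sym PMxi).
Qed.
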